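(* Let $(L,[\cdot,\cdot,\cdot],\alpha,\omega)$ be a symplectic 3-Hom-Lie algebra. Then the trilinear operation $\{\cdot,\cdot,\cdot\}$ on $L$ determined by $$\omega(\{x,y,z\},\alpha(w))=-\omega(\alpha(z),[x,y,w])\quad\text{for all }x,y,z,w\in L$$ makes $(L,\{\cdot,\cdot,\cdot\},\alpha)$ a 3-Hom-pre-Lie algebra compatible with $L$, i.e. $\{x,y,z\}+\{y,z,x\}+\{z,x,y\}=[x,y,z]$ for all $x,y,z\in L$.
   Context: A 3-Hom-Lie algebra is a triple $(L,[\cdot,\cdot,\cdot],\alpha)$ with $[\cdot,\cdot,\cdot]:\wedge^3L\to L$ skew-symmetric trilinear and $\alpha$ linear satisfying $[\alpha(x),\alpha(y),[u,v,w]]=[[x,y,u],\alpha(v),\alpha(w)]+[\alpha(u),[x,y,v],\alpha(w)]+[\alpha(u),\alpha(v),[x,y,w]]$; it is regular if $\alpha$ is an algebra automorphism. A symplectic 3-Hom-Lie algebra $(L,[\cdot,\cdot,\cdot],\alpha,\omega)$ is a regular 3-Hom-Lie algebra with a nondegenerate skew-symmetric bilinear form $\omega$ such that $\omega(\alpha(x),\alpha(y))=\omega(x,y)$ and $\omega([x,y,z],\alpha(w))-\omega([y,z,w],\alpha(x))+\omega([z,w,x],\alpha(y))-\omega([w,x,y],\alpha(z))=0$ for all $x,y,z,w$. A 3-Hom-pre-Lie algebra is $(L,\{\cdot,\cdot,\cdot\},\alpha)$ with trilinear $\{\cdot,\cdot,\cdot\}$ such that, with $[x,y,z]_C=\{x,y,z\}+\{y,z,x\}+\{z,x,y\}$: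 $\{x,y,z\}=-\{y,x,z\}$; $\{\alpha(x),\alpha(y),\{z,u,v\}\}=\{[x,y,z]_C,\alpha(u),\alpha(v)\}+\{\alpha(z),[x,y,u]_C,\alpha(v)\}+\{\alpha(z),\alpha(u),\{x,y,v\}\}$; $\{[x,y,z]_C,\alpha(u),\alpha(v)\}=\{\alpha(x),\alpha(y),\{z,u,v\}\}+\{\alpha(y),\alpha(z),\{x,u,v\}\}+\{\alpha(z),\alpha(x),\{y,u,v\}\}$. *)

From HB Require Import structures.
From mathcomp Require Import all_boot all_order all_algebra.
Set Implicit Arguments. Unset Strict Implicit. Unset Printing Implicit Defensive.
Import GRing.Theory.
Local Open Scope ring_scope.

Section Defs.
Variables (K : fieldType) (L : lmodType K).

Definition trilinear (f : L -> L -> L -> L) : Prop :=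
  [/\ forall (a : K) x x' y z, f (a *: x + x') y z = a *: f x y z + f x' y z,
      forall (a : K) x y y' z, f x (a *: y + y') z = a *: f x y z + f x y' z
    & forall (a : K) x y z z', f x y (a *: z + z') = a *: f x y z + f x y z'].

Definition alternating3 (f : L -> L -> L -> L) : Prop :=
  [/\ forall x z, f x x z = 0, forall x y, f x y y = 0 & forall x y, f x y x = 0].

Definition linear_map (al : L -> L) : Prop :=
  forall (a : K) x y, al (a *: x + y) = a *: al x + al y.

Definition hom_lie3 (br : L -> L -> L -> L) (al : L -> L) : Prop :=
  [/\ trilinear br, alternating3 br, linear_map al &
   forall x y u v w,
     br (al x) (al y) (br u v w) =
       br (br x y u) (al v) (al w) + br (al u) (br x y v) (al w)
       + br (al u) (al v) (br x y w)].

Definition regular_hom_lie3 br al : Prop :=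
  [/\ hom_lie3 br al, bijective al &
      forall x y z, al (br x y z) = br (al x) (al y) (al z)].

Definition bilinear_form (om : L -> L -> K) : Prop :=
  (forall (a : K) x x' y, om (a *: x + x') y = a * om x y + om x' y) /\
  (forall (a : K) x y y', om x (a *: y + y') = a * om x y + om x y').

Definition symplectic_hom_lie3 br al (om : L -> L -> K) : Prop :=
  [/\ regular_hom_lie3 br al, bilinear_form om /\
      (forall x y, om x y = - om y x),
      (forall x, (forall y, om x y = 0) -> x = 0),
      (forall x y, om (al x) (al y) = om x y) &
      forall x y z w,
        om (br x y z) (al w) - om (br y z w) (al x) + om (br z w x) (al y)
        - om (br w x y) (al z) = 0].

Definition cyc3 (pr : L -> L -> L -> L) x y z : L :=
  pr x y z + pr y z x + pr z x y.

Definition hom_pre_lie3 (pr : L -> L -> L -> L) (al : L -> L) : Prop :=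
  [/\ trilinear pr, linear_map al,
      (forall x y z, pr x y z = - pr y x z),
      (forall x y z u v,
         pr (al x) (al y) (pr z u v) =
           pr (cyc3 pr x y z) (al u) (al v) + pr (al z) (cyc3 pr x y u) (al v)
           + pr (al z) (al u) (pr x y v)) &
      (forall x y z u v,
         pr (cyc3 pr x y z) (al u) (al v) =
           pr (al x) (al y) (pr z u v) + pr (al y) (al z) (pr x u v)
           + pr (al z) (al x) (pr y u v))].

End Defs.

From HB Require Import structures.
From mathcomp Require Import all_boot all_order all_algebra.
From mathcomp Require Import ring.
Set Implicit Arguments. Unset Strict Implicit.
Import GRing.Theory.
Local Open Scope ring_scope.

(* Since al is onto, (p, w) |-> om p (al w) is nondegenerate, and the defining
   relation reads om {a,b,c} (al w) = om [a,b,w] (al c).  Paired in this way,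
   compatibility becomes the symplectic condition, and after pairing with
   al (al w) the two 3-Hom-pre-Lie identities become identities between
   brackets: the fundamental identity itself and its consequence
   hom_lie3_bracket_left.  Moving al across uses the al-invariance of om and
   the multiplicativity of al, which also make al an automorphism of
   {.,.,.}. *)

Section Multilinear.
Variables (K : fieldType) (L : lmodType K).

Section Trilinear.
Variable f : L -> L -> L -> L.
Hypothesis fT : trilinear f.

Lemma trilinearDl x x' y z : f (x + x') y z = f x y z + f x' y z.
Proof. by case: fT => fD _ _; rewrite -[x in LHS]scale1r fD scale1r. Qed.

Lemma trilinearDm x y y' z : f x (y + y') z = f x y z + f x y' z.
Proof. by case: fT => _ fD _; rewrite -[y in LHS]scale1r fD scale1r. Qed.

Lemma trilinearDr x y z z' : f x y (z + z') = f x y z + f x y z'.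
Proof. by case: fT => _ _ fD; rewrite -[z in LHS]scale1r fD scale1r. Qed.

Lemma trilinearNr x y z : f x y (- z) = - f x y z.
Proof.
apply/eqP; rewrite -addr_eq0 -trilinearDr addNr.
by apply/eqP/(@addrI _ (f x y 0)); rewrite -trilinearDr !addr0.
Qed.

Hypothesis fA : alternating3 f.

Lemma alternating3_swapl x y z : f y x z = - f x y z.
Proof.
apply/eqP; rewrite -addr_eq0 addrC; case: fA => f0 _ _.
by have := f0 (x + y) z; rewrite trilinearDl !trilinearDm !f0 add0r addr0 => ->.
Qed.

Lemma alternating3_swapr x y z : f x z y = - f x y z.
Proof.
apply/eqP; rewrite -addr_eq0 addrC; case: fA => _ f0 _.
by have := f0 x (y + z); rewrite trilinearDm !trilinearDr !f0 add0r addr0 => ->.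
Qed.

Lemma alternating3_cycle x y z : f y z x = f x y z.
Proof. by rewrite alternating3_swapr alternating3_swapl opprK. Qed.

End Trilinear.

Section BilinearForm.
Variable om : L -> L -> K.
Hypothesis omB : bilinear_form om.

Lemma bilinear_formDl x x' y : om (x + x') y = om x y + om x' y.
Proof. by case: omB => omD _; rewrite -[x in LHS]scale1r omD mul1r. Qed.

Lemma bilinear_formNl x y : om (- x) y = - om x y.
Proof.
apply/eqP; rewrite -addr_eq0 -bilinear_formDl addNr.
by apply/eqP/(@addrI _ (om 0 y)); rewrite -bilinear_formDl !addr0.
Qed.

End BilinearForm.

Section HomLie3.
Variables (br : L -> L -> L -> L) (al : L -> L).
Hypothesis brH : hom_lie3 br al.

Let brT : trilinear br. Proof. by case: brH. Qed.
Let brA : alternating3 br. Proof. by case: brH. Qed.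

Let br_swapr := alternating3_swapr brT brA.
Let br_cycle := alternating3_cycle brT brA.

Lemma hom_lie3_bracket_left x y z u w :
  br (br x y z) (al u) (al w) =
    - (br (al x) (al u) (br y z w) + br (al y) (al u) (br z x w)
       + br (al z) (al u) (br x y w)).
Proof.
case: brH => _ _ _ FI.
have FIxy := FI x y z u w; have FIzw := FI z w x y u.
rewrite br_swapr -(br_cycle (br z w x)) (br_swapr z x w)
  (br_swapr (al x) (al u)) (br_cycle y z w) (br_swapr z u w) !(trilinearNr brT) in FIzw.
have -> : br (br x y z) (al u) (al w) = br (al x) (al y) (br z u w)
    - br (al z) (al u) (br x y w) - br (al z) (br x y u) (al w).
  by rewrite FIxy !addrK.
rewrite FIzw !opprD addrC !addrA addrNK.
by congr (_ + _); rewrite addrC.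
Qed.

End HomLie3.

End Multilinear.

Section SymplecticHomLie3.
Variables (K : fieldType) (L : lmodType K).
Variables (br : L -> L -> L -> L) (al : L -> L) (om : L -> L -> K).
Variable pr : L -> L -> L -> L.
Hypothesis symp : symplectic_hom_lie3 br al om.
Hypothesis om_pr : forall x y z w, om (pr x y z) (al w) = - om (al z) (br x y w).

Let brH : hom_lie3 br al. Proof. by case: symp => [[]]. Qed.
Let brT : trilinear br. Proof. by case: brH. Qed.
Let brA : alternating3 br. Proof. by case: brH. Qed.
Let al_br x y z : al (br x y z) = br (al x) (al y) (al z).
Proof. by case: symp => [[]]. Qed.
Let al_surj w : exists v, w = al v.
Proof. by case: symp => [[_ [g _ alK]]] _ _ _ _; exists (g w); rewrite alK. Qed.
Let omB : bilinear_form om. Proof. by case: symp => _ []. Qed.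
Let om_skew x y : om x y = - om y x. Proof. by case: symp => _ []. Qed.
Let om_al x y : om (al x) (al y) = om x y. Proof. by case: symp. Qed.

Let omDl := bilinear_formDl omB.
Let omNl := bilinear_formNl omB.

Lemma pairing_al_inj p q : (forall w, om p (al w) = om q (al w)) -> p = q.
Proof.
move=> eq_pq; apply/eqP; rewrite -subr_eq0; apply/eqP.
case: symp => _ _ om_nondeg _ _; apply: om_nondeg => y; have [v ->] := al_surj y.
by rewrite omDl omNl eq_pq subrr.
Qed.

Lemma pairing_al2_inj p q : (forall w, om p (al (al w)) = om q (al (al w))) -> p = q.
Proof. by move=> eq_pq; apply: pairing_al_inj => w; have [v ->] := al_surj w. Qed.

Lemma om_pr_al a b c w : om (pr a b c) (al w) = om (br a b w) (al c).
Proof. by rewrite om_pr om_skew opprK. Qed.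

Lemma cyc3_pr x y z : cyc3 pr x y z = br x y z.
Proof.
apply: pairing_al_inj => w; rewrite /cyc3 !omDl !om_pr_al.
case: symp => _ _ _ _ /(_ x y z w).
rewrite (alternating3_swapr brT brA z x) -(alternating3_cycle brT brA w x y) omNl.
by move=> om_cyc; rewrite -[RHS]subr0 -om_cyc; ring.
Qed.

Lemma pr_swapl x y z : pr x y z = - pr y x z.
Proof.
apply: pairing_al_inj => w.
by rewrite omNl !om_pr_al (alternating3_swapl brT brA x y) omNl opprK.
Qed.

Lemma al_pr x y z : al (pr x y z) = pr (al x) (al y) (al z).
Proof. by apply: pairing_al2_inj => w; rewrite om_al !om_pr_al -al_br om_al. Qed.

Lemma om_al_pr_pr a b c d e w :
  om (pr (al a) (al b) (pr c d e)) (al (al w)) =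
    - om (br (al c) (al d) (br a b w)) (al (al e)).
Proof. by rewrite om_pr_al -al_br om_skew al_pr om_pr_al. Qed.

Lemma pr_fundamental_left x y z u v :
  pr (al x) (al y) (pr z u v) =
    pr (br x y z) (al u) (al v) + pr (al z) (br x y u) (al v)
    + pr (al z) (al u) (pr x y v).
Proof.
apply: pairing_al2_inj => w; rewrite !omDl !om_al_pr_pr !om_pr_al.
case: brH => _ _ _ /(_ x y z u w) ->; rewrite !omDl; ring.
Qed.

Lemma pr_fundamental_right x y z u v :
  pr (br x y z) (al u) (al v) =
    pr (al x) (al y) (pr z u v) + pr (al y) (al z) (pr x u v)
    + pr (al z) (al x) (pr y u v).
Proof.
apply: pairing_al2_inj => w; rewrite !omDl !om_al_pr_pr om_pr_al.
by rewrite (hom_lie3_bracket_left brH) omNl !omDl; ring.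
Qed.

End SymplecticHomLie3.

Theorem proposition5p6 (K : fieldType) (L : lmodType K)
    (br : L -> L -> L -> L) (al : L -> L) (om : L -> L -> K)
    (pr : L -> L -> L -> L) :
  symplectic_hom_lie3 br al om ->
  trilinear pr ->
  (forall x y z w, om (pr x y z) (al w) = - om (al z) (br x y w)) ->
  hom_pre_lie3 pr al /\ (forall x y z, cyc3 pr x y z = br x y z).
Proof.
move=> symp prT om_pr; have cyc3E := cyc3_pr symp om_pr.
have al_lin : linear_map al by case: symp => [[[]]].
split=> //; split=> // [x y z|x y z u v|x y z u v]; rewrite ?cyc3E.
- exact: pr_swapl symp om_pr x y z.
- exact: pr_fundamental_left symp om_pr x y z u v.
- exact: pr_fundamental_right symp om_pr x y z u v.
Qed.
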